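(* Let $X, Y \subseteq \omega$. There exists a non-order-reversing embedding $f : \mathcal{G}^X \to \mathcal{G}^Y$ if and only if $X \le_e Y$.
   Context: A pca is a set with a partial binary application operation containing distinct $\mathrm{s},\mathrm{k}$ with $\mathrm{k}ab\downarrow=a$, $\mathrm{s}ab\downarrow$, $\mathrm{s}abc\simeq(ac)(bc)$. An embedding of pcas is an injective map $f$ with: if $ab$ is defined then $f(a)f(b)$ is defined and equals $f(ab)$. Scott's graph model: on $\mathcal{P}(\omega)$, $A\cdot B=\{n:\exists u\,(\langle n,u\rangle\in A\wedge D_u\subseteq B)\}$, with $\langle\cdot,\cdot\rangle$ a bijective computable pairing, $\langle 0,0\rangle=0$, and $D_u$ the finite set with canonical code $u$. $\mathcal{G}^Z$ is the least class containing $Z$ and all c.e. sets and closed under this application (equivalently, all sets $\le_e Z$), a pca. $A\le_e Z$ means there is a c.e. relation $R$ with $x\in A\iff\exists u\,(R(x,u)\wedge D_u\subseteq Z)$. An embedding $f:\mathcal{G}^X\to\mathcal{G}^Y$ is order-reversing if for all $A,B\in\mathcal{G}^X$ with $A\subseteq B$ we have $f(B)\subseteq f(A)$. *)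

From Stdlib Require Import Arith List.
Import ListNotations.

Inductive PR : Type :=
| PR_zero : PR
| PR_succ : PR
| PR_proj : nat -> PR
| PR_comp : PR -> list PR -> PR
| PR_prec : PR -> PR -> PR
| PR_mu   : PR -> PR.

Inductive eval : PR -> list nat -> nat -> Prop :=
| ev_zero v : eval PR_zero v 0
| ev_succ x v : eval PR_succ (x :: v) (S x)
| ev_proj i v : eval (PR_proj i) v (nth i v 0)
| ev_comp f gs v ws y :
    evals gs v ws -> eval f ws y -> eval (PR_comp f gs) v y
| ev_prec0 f g v y : eval f v y -> eval (PR_prec f g) (0 :: v) y
| ev_precS f g n v r y :
    eval (PR_prec f g) (n :: v) r -> eval g (n :: r :: v) y ->
    eval (PR_prec f g) (S n :: v) y
| ev_mu f v n :
    eval f (n :: v) 0 ->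
    (forall m, m < n -> exists k, eval f (m :: v) (S k)) ->
    eval (PR_mu f) v n
with evals : list PR -> list nat -> list nat -> Prop :=
| evs_nil v : evals [] v []
| evs_cons g gs v w ws :
    eval g v w -> evals gs v ws -> evals (g :: gs) v (w :: ws).

Definition ce (A : nat -> Prop) : Prop :=
  exists e : PR, forall x, A x <-> exists y, eval e [x] y.

Definition ce_rel (R : nat -> nat -> Prop) : Prop :=
  exists e : PR, forall x u, R x u <-> exists y, eval e [x; u] y.

Definition pair (x y : nat) : nat := (x + y) * (x + y + 1) / 2 + y.

Definition D (u : nat) (i : nat) : Prop := Nat.testbit u i = true.

Definition subset (A B : nat -> Prop) : Prop := forall n, A n -> B n.

Definition gapp (A B : nat -> Prop) : nat -> Prop :=
  fun n => exists u, A (pair n u) /\ subset (D u) B.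

Inductive inG (Z : nat -> Prop) : (nat -> Prop) -> Prop :=
| G_base A : (forall n, A n <-> Z n) -> inG Z A
| G_ce A : ce A -> inG Z A
| G_app A B C : inG Z B -> inG Z C -> (forall n, A n <-> gapp B C n) -> inG Z A.

Definition enum_le (A Z : nat -> Prop) : Prop :=
  exists R, ce_rel R /\ forall x, A x <-> exists u, R x u /\ subset (D u) Z.

(* embedding of pcas G^X -> G^Y (application in G is total) *)
Definition embedding (X Y : nat -> Prop) (f : (nat -> Prop) -> (nat -> Prop)) : Prop :=
  (forall A, inG X A -> inG Y (f A)) /\
  (forall A B, inG X A -> inG X B -> f A = f B -> A = B) /\
  (forall A B, inG X A -> inG X B -> f (gapp A B) = gapp (f A) (f B)).

Definition order_reversing (X : nat -> Prop) (f : (nat -> Prop) -> (nat -> Prop)) : Prop :=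
  forall A B, inG X A -> inG X B -> subset A B -> subset (f B) (f A).

From Stdlib Require Import Arith List Lia Bool.
From Stdlib Require Import FunctionalExtensionality PropExtensionality Classical.
Import ListNotations.

(* If X ≤e Y, then X = Φ·Y for a c.e. Φ, so G^X ⊆ G^Y and the identity is an
   embedding; it is not order-reversing since ∅ ⊆ ω.

   Conversely, let f be an embedding with A ⊆ B in G^X and k ∈ f(B) \ f(A).  There
   are c.e. combinators Z, S and V with V·n̄·X·A·B = A ∪ {x ∈ B | n ∈ X}, where
   n̄ = S·(…(S·Z)) is the numeral {n}; since A ⊆ B this is B if n ∈ X and A otherwise.
   As f preserves application, n ∈ X iff k ∈ f(V)·f(n̄)·f(X)·f(A)·f(B), and
   f(n̄) is the n-fold application of f(S) to f(Z).  Every element of G^Y is Σ⁰₁ in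
   positive information about Y, application preserves uniform Σ⁰₁ families, and
   the iterates f(n̄) are uniformly Σ⁰₁ because membership in them has finite
   derivations.  Hence X ≤e Y.

   The Σ⁰₁ calculus runs on a language of primitive recursive expressions with a
   total denotation: these compile to partial recursive codes, and conversely the
   fuel-bounded evaluator of partial recursive codes is one of them. *)

Fixpoint PR_nested_ind (P : PR -> Prop) (Hzero : P PR_zero) (Hsucc : P PR_succ)
  (Hproj : forall i, P (PR_proj i))
  (Hcomp : forall f gs, P f -> Forall P gs -> P (PR_comp f gs))
  (Hprec : forall f g, P f -> P g -> P (PR_prec f g))
  (Hmu : forall f, P f -> P (PR_mu f)) (e : PR) {struct e} : P e :=
  let IH := PR_nested_ind P Hzero Hsucc Hproj Hcomp Hprec Hmu in
  match e with
  | PR_zero => Hzero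
  | PR_succ => Hsucc
  | PR_proj i => Hproj i
  | PR_comp f gs =>
      Hcomp f gs (IH f)
        ((fix all (l : list PR) : Forall P l :=
            match l with
            | [] => Forall_nil _
            | g :: l' => Forall_cons _ (IH g) (all l')
            end) gs)
  | PR_prec f g => Hprec f g (IH f) (IH g)
  | PR_mu f => Hmu f (IH f)
  end.

Fixpoint all_some (l : list (option nat)) : option (list nat) :=
  match l with
  | [] => Some []
  | o :: l' =>
      match o, all_some l' with
      | Some w, Some ws => Some (w :: ws)
      | _, _ => None
      end
  end.

Fixpoint prec_fuel (n : nat) (b : option nat) (s : nat -> nat -> option nat) : option nat :=
  match n with
  | 0 => b
  | S k => match prec_fuel k b s with Some r => s k r | None => None end
  end.

(* The state of an unbounded search for a zero of [F] after [k] steps: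
   [0] while every tested value is a successor, [1] once a test has diverged,
   and [S (S n)] once [n] has been found. *)
Fixpoint mu_search (F : nat -> option nat) (k : nat) : nat :=
  match k with
  | 0 => 0
  | S k' =>
      match mu_search F k' with
      | 0 => match F k' with None => 1 | Some 0 => S (S k') | Some (S _) => 0 end
      | r => r
      end
  end.

Fixpoint eval_fuel (t : nat) (e : PR) (v : list nat) : option nat :=
  match e with
  | PR_zero => Some 0
  | PR_succ => match v with x :: _ => Some (S x) | [] => None end
  | PR_proj i => Some (nth i v 0)
  | PR_comp f gs =>
      match all_some (map (fun g => eval_fuel t g v) gs) with
      | Some ws => eval_fuel t f ws
      | None => None
      end
  | PR_prec f g =>
      match v with
      | [] => None
      | n :: w => prec_fuel n (eval_fuel t f w) (fun k r => eval_fuel t g (k :: r :: w))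
      end
  | PR_mu f =>
      match mu_search (fun n => eval_fuel t f (n :: v)) t with
      | S (S n) => Some n
      | _ => None
      end
  end.

Lemma mu_search_spec (F : nat -> option nat) k :
  (mu_search F k = 0 -> forall m, m < k -> exists j, F m = Some (S j)) /\
  (forall n, mu_search F k = S (S n) ->
     F n = Some 0 /\ forall m, m < n -> exists j, F m = Some (S j)).
Proof.
  induction k as [|k [IH0 IHfound]]; simpl.
  - split; [lia | discriminate].
  - destruct (mu_search F k) as [|[|r]].
    + destruct (F k) as [[|j]|] eqn:Fk.
      * split; [discriminate|]. intros n Hn; injection Hn as <-. auto.
      * split; [|discriminate]. intros _ m Hm.
        destruct (Nat.eq_dec m k) as [->|]; [eauto|]. apply IH0; auto; lia.
      * split; discriminate.
    + split; discriminate.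
    + split; [discriminate | exact IHfound].
Qed.

Lemma mu_search_found (F : nat -> option nat) n :
  F n = Some 0 -> (forall m, m < n -> exists j, F m = Some (S j)) ->
  forall k, n < k -> mu_search F k = S (S n).
Proof.
  intros Fn Fbelow.
  assert (Hbefore : forall k, k <= n -> mu_search F k = 0).
  { induction k as [|k IH]; intros Hk; simpl; auto.
    rewrite IH by lia. destruct (Fbelow k) as [j ->]; [lia | reflexivity]. }
  induction k as [|k IH]; intros Hk; [lia|]. simpl.
  destruct (Nat.eq_dec k n) as [->|].
  - rewrite Hbefore, Fn by lia. reflexivity.
  - rewrite IH by lia. reflexivity.
Qed.

Lemma eval_fuel_sound e : forall t v y, eval_fuel t e v = Some y -> eval e v y.
Proof.
  induction e as [| | i | f gs IHf IHgs | f g IHf IHg | f IHf] using PR_nested_ind;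
    intros t v y Hy; simpl in Hy.
  - injection Hy as <-. constructor.
  - destruct v; [discriminate | injection Hy as <-]. constructor.
  - injection Hy as <-. constructor.
  - destruct (all_some (map (fun g => eval_fuel t g v) gs)) as [ws|] eqn:Ews; [|discriminate].
    apply ev_comp with ws; [|eapply IHf; eauto].
    clear Hy IHf. revert ws Ews. induction IHgs as [|g gs IHg IHgs IH]; intros ws Ews; simpl in Ews.
    + injection Ews as <-. constructor.
    + destruct (eval_fuel t g v) eqn:Eg; [|discriminate].
      destruct (all_some (map (fun g => eval_fuel t g v) gs)); [|discriminate].
      injection Ews as <-. constructor; eauto.
  - destruct v as [|n w]; [discriminate|].
    revert y Hy. induction n as [|n IHn]; intros y Hy; simpl in Hy.
    + constructor. eauto.
    + destruct (prec_fuel n (eval_fuel t f w) (fun k r => eval_fuel t g (k :: r :: w)))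
        eqn:Er; [|discriminate].
      econstructor; eauto.
  - destruct (mu_search (fun n => eval_fuel t f (n :: v)) t) as [|[|n]] eqn:Es;
      try discriminate.
    injection Hy as <-.
    destruct (proj2 (mu_search_spec _ t) n Es) as [Hzero Hbelow].
    constructor; eauto.
    intros m Hm. destruct (Hbelow m Hm) as [j Hj]. eauto.
Qed.

Definition eventually (P : nat -> Prop) : Prop := exists t0, forall t, t0 <= t -> P t.

Lemma eventually_and (P Q : nat -> Prop) :
  eventually P -> eventually Q -> eventually (fun t => P t /\ Q t).
Proof.
  intros [t1 H1] [t2 H2]. exists (t1 + t2). intros t Ht. split; [apply H1 | apply H2]; lia.
Qed.

Lemma eventually_forall_lt (P : nat -> nat -> Prop) n :
  (forall m, m < n -> eventually (P m)) -> eventually (fun t => forall m, m < n -> P m t).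
Proof.
  induction n as [|n IH]; intros H.
  - exists 0. intros; lia.
  - destruct (eventually_and _ _ (IH (fun m Hm => H m ltac:(lia))) (H n ltac:(lia)))
      as [t0 Ht0].
    exists t0. intros t Ht m Hm. destruct (Ht0 t Ht) as [Hbelow Hn].
    destruct (Nat.eq_dec m n) as [->|]; auto. apply Hbelow. lia.
Qed.

Fixpoint eval_fuel_complete e v y (H : eval e v y) {struct H} :
  eventually (fun t => eval_fuel t e v = Some y)
with evals_fuel_complete gs v ws (H : evals gs v ws) {struct H} :
  eventually (fun t => all_some (map (fun g => eval_fuel t g v) gs) = Some ws).
Proof.
  - destruct H as [v | x v | i v | f gs v ws y Hgs Hf | f g v y Hf
                  | f g n v r y Hrec Hg | f v n Hzero Hbelow].
    + exists 0; reflexivity.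
    + exists 0; reflexivity.
    + exists 0; reflexivity.
    + destruct (eventually_and _ _ (evals_fuel_complete _ _ _ Hgs) (eval_fuel_complete _ _ _ Hf))
        as [t0 Ht0].
      exists t0. intros t Ht. simpl. destruct (Ht0 t Ht) as [-> ->]. reflexivity.
    + destruct (eval_fuel_complete _ _ _ Hf) as [t0 Ht0].
      exists t0. intros t Ht. apply Ht0; auto.
    + destruct (eventually_and _ _ (eval_fuel_complete _ _ _ Hrec) (eval_fuel_complete _ _ _ Hg))
        as [t0 Ht0].
      exists t0. intros t Ht. destruct (Ht0 t Ht) as [Er Eg]. simpl in Er |- *.
      rewrite Er. exact Eg.
    + assert (Hsucc : forall m, m < n ->
                eventually (fun t => exists j, eval_fuel t f (m :: v) = Some (S j))).
      { intros m Hm. destruct (Hbelow m Hm) as [j Hj].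
        destruct (eval_fuel_complete _ _ _ Hj) as [t0 Ht0]. exists t0. eauto. }
      destruct (eventually_and _ _ (eval_fuel_complete _ _ _ Hzero)
                  (eventually_forall_lt _ _ Hsucc)) as [t0 Ht0].
      exists (S n + t0). intros t Ht. destruct (Ht0 t ltac:(lia)) as [Ez Es]. simpl.
      rewrite (mu_search_found _ n Ez Es) by lia. reflexivity.
  - destruct H as [v | g gs v w ws Hg Hgs].
    + exists 0; reflexivity.
    + destruct (eventually_and _ _ (eval_fuel_complete _ _ _ Hg) (evals_fuel_complete _ _ _ Hgs))
        as [t0 Ht0].
      exists t0. intros t Ht. simpl. destruct (Ht0 t Ht) as [-> ->]. reflexivity.
Qed.

Lemma eval_deterministic e v y1 y2 : eval e v y1 -> eval e v y2 -> y1 = y2.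
Proof.
  intros H1 H2.
  destruct (eventually_and _ _ (eval_fuel_complete _ _ _ H1) (eval_fuel_complete _ _ _ H2))
    as [t0 Ht0].
  destruct (Ht0 t0 (le_n _)) as [E1 E2]. rewrite E1 in E2. congruence.
Qed.

(* Primitive recursive expressions over a de Bruijn environment: [ECall f args]
   runs [f] in the environment of the values of [args], and [ERec n b s] iterates
   [s], run in the environment [k :: r :: env], [n] times starting from [b]. *)
Inductive pexp : Type :=
| EV : nat -> pexp
| EZ : pexp
| ES : pexp -> pexp
| ECall : pexp -> list pexp -> pexp
| ERec : pexp -> pexp -> pexp -> pexp.

Fixpoint pexp_nested_ind (P : pexp -> Prop) (Hvar : forall i, P (EV i)) (Hzero : P EZ)
  (Hsucc : forall a, P a -> P (ES a))
  (Hcall : forall f args, P f -> Forall P args -> P (ECall f args))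
  (Hrec : forall n b s, P n -> P b -> P s -> P (ERec n b s)) (x : pexp) {struct x} : P x :=
  let IH := pexp_nested_ind P Hvar Hzero Hsucc Hcall Hrec in
  match x with
  | EV i => Hvar i
  | EZ => Hzero
  | ES a => Hsucc a (IH a)
  | ECall f args =>
      Hcall f args (IH f)
        ((fix all (l : list pexp) : Forall P l :=
            match l with
            | [] => Forall_nil _
            | g :: l' => Forall_cons _ (IH g) (all l')
            end) args)
  | ERec n b s => Hrec n b s (IH n) (IH b) (IH s)
  end.

Fixpoint iter_rec (b : nat) (step : nat -> nat -> nat) (k : nat) : nat :=
  match k with 0 => b | S k' => step k' (iter_rec b step k') end.

Fixpoint den (env : list nat) (x : pexp) : nat :=
  match x with
  | EV i => nth i env 0
  | EZ => 0
  | ES a => S (den env a)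
  | ECall f args => den (map (den env) args) f
  | ERec n b s => iter_rec (den env b) (fun k r => den (k :: r :: env) s) (den env n)
  end.

Lemma iter_rec_eq b step (g : nat -> nat) :
  g 0 = b -> (forall k, step k (g k) = g (S k)) -> forall m, iter_rec b step m = g m.
Proof. intros H0 HS m. induction m as [|m IH]; simpl; [auto | rewrite IH; auto]. Qed.

Lemma map_nth_seq_app v pre :
  map (fun i => nth i (pre ++ v) 0) (seq (length pre) (length v)) = v.
Proof.
  revert pre. induction v as [|x v IH]; intros pre; simpl; auto.
  rewrite nth_middle. f_equal.
  replace (pre ++ x :: v) with ((pre ++ [x]) ++ v) by (rewrite <- app_assoc; auto).
  replace (S (length pre)) with (length (pre ++ [x])) by (rewrite length_app; simpl; lia).
  apply IH.
Qed.

Lemma den_vars env pre v d k :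
  env = pre ++ v -> length pre = d -> length v = k ->
  map (den env) (map EV (seq d k)) = v.
Proof. intros -> <- <-. rewrite map_map. apply map_nth_seq_app. Qed.

Fixpoint compile (L : nat) (x : pexp) : PR :=
  match x with
  | EV i => PR_proj i
  | EZ => PR_zero
  | ES a => PR_comp PR_succ [compile L a]
  | ECall f args => PR_comp (compile (length args) f) (map (compile L) args)
  | ERec n b s => PR_comp (PR_prec (compile L b) (compile (S (S L)) s))
                         (compile L n :: map PR_proj (seq 0 L))
  end.

Lemma evals_proj l v : evals (map PR_proj l) v (map (fun i => nth i v 0) l).
Proof. induction l; simpl; repeat constructor; auto. Qed.

Lemma compile_correct x : forall v, eval (compile (length v) x) v (den v x).
Proof.
  induction x as [i | | a IHa | f args IHf IHargs | n b s IHn IHb IHs] using pexp_nested_ind;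
    intros v; simpl.
  - constructor.
  - constructor.
  - eapply ev_comp; repeat constructor. apply IHa.
  - apply ev_comp with (ws := map (den v) args).
    + clear IHf. induction IHargs; simpl; constructor; auto.
    + rewrite <- (length_map (den v)). apply IHf.
  - apply ev_comp with (ws := den v n :: v).
    + constructor; [apply IHn|].
      pose proof (evals_proj (seq 0 (length v)) v) as Hv.
      pose proof (map_nth_seq_app v []) as Eseq; simpl in Eseq. rewrite Eseq in Hv. exact Hv.
    + induction (den v n) as [|m IHm]; simpl.
      * constructor. apply IHb.
      * eapply ev_precS; [exact IHm | apply (IHs (_ :: _ :: v))].
Qed.

Definition oneE : pexp := ES EZ.
Definition ifzE (a b c : pexp) : pexp := ECall (ERec (EV 0) (EV 1) (EV 4)) [a; b; c].
Definition predE (a : pexp) : pexp := ECall (ERec (EV 0) EZ (EV 0)) [a].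
Definition addE (a b : pexp) : pexp := ECall (ERec (EV 0) (EV 1) (ES (EV 1))) [a; b].
Definition mulE (a b : pexp) : pexp := ECall (ERec (EV 0) EZ (addE (EV 1) (EV 3))) [a; b].
Definition subE (a b : pexp) : pexp := ECall (ERec (EV 1) (EV 0) (predE (EV 1))) [a; b].
Definition oddE (a : pexp) : pexp := ECall (ERec (EV 0) EZ (ifzE (EV 1) oneE EZ)) [a].
Definition div2E (a : pexp) : pexp := ECall (ERec (EV 0) EZ (addE (EV 1) (oddE (EV 0)))) [a].
Definition powE (a : pexp) : pexp := ECall (ERec (EV 0) oneE (addE (EV 1) (EV 1))) [a].
Definition triE (a : pexp) : pexp := ECall (ERec (EV 0) EZ (addE (EV 1) (ES (EV 0)))) [a].
Definition pairE (a b : pexp) : pexp := addE (triE (addE a b)) b.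
Definition bitE (w i : pexp) : pexp := oddE (ECall (ERec (EV 1) (EV 0) (div2E (EV 1))) [w; i]).
Definition memE (w i : pexp) : pexp := subE oneE (bitE w i).
Definition eqE (a b : pexp) : pexp := addE (subE a b) (subE b a).
Definition andE : pexp -> pexp -> pexp := addE.
Definition orE : pexp -> pexp -> pexp := mulE.

Fixpoint constE (c : nat) : pexp := match c with 0 => EZ | S c => ES (constE c) end.

Lemma den_ifz env a b c :
  den env (ifzE a b c) = match den env a with 0 => den env b | S _ => den env c end.
Proof. unfold ifzE. cbn. destruct (den env a); reflexivity. Qed.

Lemma den_pred env a : den env (predE a) = pred (den env a).
Proof. unfold predE. cbn. destruct (den env a); reflexivity. Qed.

Lemma den_add env a b : den env (addE a b) = den env a + den env b.
Proof.
  unfold addE. cbn [den map nth]. rewrite (iter_rec_eq _ _ (fun m => m + den env b)); auto.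
Qed.

Lemma den_mul env a b : den env (mulE a b) = den env a * den env b.
Proof.
  unfold mulE. cbn [den map nth].
  rewrite (iter_rec_eq _ _ (fun m => m * den env b)); auto.
  intros k. rewrite den_add. cbn [den nth]. lia.
Qed.

Lemma den_sub env a b : den env (subE a b) = den env a - den env b.
Proof.
  unfold subE. cbn [den map nth].
  rewrite (iter_rec_eq _ _ (fun m => den env a - m)); try lia.
  intros k. rewrite den_pred. cbn [den nth]. lia.
Qed.

Lemma den_odd env a : den env (oddE a) = Nat.b2n (Nat.odd (den env a)).
Proof.
  unfold oddE. cbn [den map nth].
  rewrite (iter_rec_eq _ _ (fun m => Nat.b2n (Nat.odd m))); auto.
  intros k. rewrite den_ifz. cbn [den nth]. rewrite Nat.odd_succ, <- Nat.negb_odd.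
  destruct (Nat.odd k); reflexivity.
Qed.

Lemma den_div2 env a : den env (div2E a) = Nat.div2 (den env a).
Proof.
  unfold div2E. cbn [den map nth].
  rewrite (iter_rec_eq _ _ Nat.div2); auto.
  intros n. rewrite den_add, den_odd. cbn [den nth].
  pose proof (Nat.div2_odd n) as Hn. pose proof (Nat.div2_odd (S n)) as HSn.
  rewrite Nat.odd_succ, <- Nat.negb_odd in HSn. destruct (Nat.odd n); simpl in *; lia.
Qed.

Lemma den_pow env a : den env (powE a) = 2 ^ den env a.
Proof.
  unfold powE. cbn [den map nth].
  rewrite (iter_rec_eq _ _ (fun m => 2 ^ m)); auto.
  intros k. rewrite den_add. cbn [den nth]. rewrite Nat.pow_succ_r'. lia.
Qed.

Lemma den_const env c : den env (constE c) = c.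
Proof. induction c; simpl; auto. Qed.

Lemma den_eq env a b : den env (eqE a b) = 0 <-> den env a = den env b.
Proof. unfold eqE. rewrite den_add, !den_sub. lia. Qed.

Lemma den_and env a b : den env (andE a b) = 0 <-> den env a = 0 /\ den env b = 0.
Proof. unfold andE. rewrite den_add. lia. Qed.

Lemma den_or env a b : den env (orE a b) = 0 <-> den env a = 0 \/ den env b = 0.
Proof. unfold orE. rewrite den_mul. apply Nat.mul_eq_0. Qed.

Fixpoint tri (s : nat) : nat := match s with 0 => 0 | S s' => tri s' + s end.

Lemma pair_tri x y : pair x y = tri (x + y) + y.
Proof.
  unfold pair. f_equal.
  assert (H : tri (x + y) * 2 = (x + y) * (x + y + 1)) by (induction (x + y); simpl; lia).
  rewrite <- H, Nat.div_mul; lia.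
Qed.

Lemma den_pair env a b : den env (pairE a b) = pair (den env a) (den env b).
Proof.
  unfold pairE, triE. rewrite den_add, pair_tri. f_equal. cbn [den map nth].
  rewrite den_add. apply iter_rec_eq; auto. intros k. rewrite den_add. cbn [den nth tri]. lia.
Qed.

Lemma pair_inj a b c d : pair a b = pair c d -> a = c /\ b = d.
Proof.
  rewrite !pair_tri. intros H.
  assert (tri_mono : forall s s', s <= s' -> tri s <= tri s')
    by (intros s s' Hs; induction Hs; simpl; lia).
  assert (Hsum : a + b = c + d).
  { destruct (lt_eq_lt_dec (a + b) (c + d)) as [[Hlt|Heq]|Hlt]; auto; exfalso.
    - pose proof (tri_mono (S (a + b)) (c + d) Hlt). simpl in *. lia.
    - pose proof (tri_mono (S (c + d)) (a + b) Hlt). simpl in *. lia. }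
  rewrite Hsum in H. lia.
Qed.

Lemma pair_ge x y : x <= pair x y /\ y <= pair x y.
Proof.
  rewrite pair_tri. assert (forall s, s <= tri s) by (induction s; simpl; lia).
  pose proof (H (x + y)). lia.
Qed.

Lemma D_lt a i : D a i -> i < a.
Proof.
  unfold D. intros H. destruct (Nat.eq_dec a 0) as [->|Ha].
  - rewrite Nat.bits_0 in H. discriminate.
  - destruct (Nat.lt_ge_cases i a) as [|Hi]; auto.
    rewrite Nat.bits_above_log2 in H; [discriminate|].
    pose proof (Nat.log2_lt_lin a ltac:(lia)). lia.
Qed.

Lemma subset_D0 (Y : nat -> Prop) : subset (D 0) Y.
Proof. intros i H. unfold D in H. rewrite Nat.bits_0 in H. discriminate. Qed.

Lemma D_pow n i : D (2 ^ n) i <-> i = n.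
Proof. unfold D. rewrite Nat.pow2_bits_eqb, Nat.eqb_eq. split; auto. Qed.

Lemma D_lor a b i : D (Nat.lor a b) i <-> D a i \/ D b i.
Proof. unfold D. rewrite Nat.lor_spec. apply orb_true_iff. Qed.

Lemma subset_D_lor (Y : nat -> Prop) a b :
  subset (D a) Y -> subset (D b) Y -> subset (D (Nat.lor a b)) Y.
Proof. intros Ha Hb i Hi. apply D_lor in Hi as [Hi|Hi]; auto. Qed.

Lemma subset_D_lor_l a b : subset (D a) (D (Nat.lor a b)).
Proof. intros i Hi. apply D_lor. auto. Qed.

Lemma subset_D_lor_r a b : subset (D b) (D (Nat.lor a b)).
Proof. intros i Hi. apply D_lor. auto. Qed.

Lemma subset_trans (A B C : nat -> Prop) : subset A B -> subset B C -> subset A C.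
Proof. unfold subset. auto. Qed.

Lemma subset_D_le a b : subset (D a) (D b) -> a <= b.
Proof.
  revert a. induction b as [b IH] using lt_wf_ind. intros a H.
  destruct (Nat.eq_dec a 0) as [|Ha]; [lia|].
  destruct (Nat.eq_dec b 0) as [->|Hb].
  { specialize (H _ (Nat.bit_log2 a Ha)). unfold D in H. rewrite Nat.bits_0 in H. discriminate. }
  pose proof (Nat.div2_odd a). pose proof (Nat.div2_odd b).
  assert (Hdiv2 : Nat.div2 a <= Nat.div2 b).
  { apply IH; [destruct (Nat.odd b); simpl in *; lia|].
    intros i Hi. unfold D in *. rewrite Nat.testbit_div2 in *. auto. }
  assert (Hodd : Nat.odd a = true -> Nat.odd b = true)
    by (rewrite <- !Nat.bit0_odd; apply H).
  destruct (Nat.odd a), (Nat.odd b); simpl in *; try lia.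
Qed.

Lemma D_empty w : subset (D w) (fun _ => False) -> w = 0.
Proof.
  intros H. destruct (Nat.eq_dec w 0) as [|Hw]; auto.
  exfalso. apply (H (Nat.log2 w)), Nat.bit_log2, Hw.
Qed.

Lemma subset_D_bounded u (G : nat -> Prop) :
  subset (D u) G <-> forall i, i < u -> ~ D u i \/ G i.
Proof.
  split.
  - intros H i _. unfold D. destruct (Nat.testbit u i) eqn:E; [right; apply H, E | left; congruence].
  - intros H i Hi. destruct (H i (D_lt _ _ Hi)); tauto.
Qed.

Lemma den_bit env w i : den env (bitE w i) = Nat.b2n (Nat.testbit (den env w) (den env i)).
Proof.
  unfold bitE. rewrite den_odd. cbn [den map nth].
  assert (Htestbit : forall i w, Nat.testbit w i = Nat.odd (Nat.iter i Nat.div2 w)).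
  { induction i0 as [|i0 IH]; intros w0; [apply Nat.bit0_odd|].
    rewrite <- Nat.testbit_div2, IH, Nat.iter_succ_r. reflexivity. }
  rewrite Htestbit, (iter_rec_eq _ _ (fun n => Nat.iter n Nat.div2 (den env w))); auto.
  intros k. rewrite den_div2. reflexivity.
Qed.

Lemma den_bit_eq0 env w i : den env (bitE w i) = 0 <-> ~ D (den env w) (den env i).
Proof. unfold D. rewrite den_bit. destruct (Nat.testbit _ _); simpl; intuition congruence. Qed.

Lemma den_mem env w i : den env (memE w i) = 0 <-> D (den env w) (den env i).
Proof.
  unfold memE, D. rewrite den_sub, den_bit. destruct (Nat.testbit _ _); simpl; intuition lia.
Qed.

Definition shiftE (d k : nat) (x : pexp) : pexp := ECall x (map EV (seq d k)).

Lemma den_shift env pre v d k x :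
  env = pre ++ v -> length pre = d -> length v = k -> den env (shiftE d k x) = den v x.
Proof. intros. unfold shiftE. cbn [den]. erewrite den_vars; eauto. Qed.

Definition bexE (k : nat) (n body : pexp) : pexp :=
  ERec n oneE (mulE (EV 1) (ECall body (EV 0 :: map EV (seq 2 k)))).
Definition ballE (k : nat) (n body : pexp) : pexp :=
  ERec n EZ (addE (EV 1) (ECall body (EV 0 :: map EV (seq 2 k)))).

Lemma den_body v i r body k : length v = k ->
  den (map (den (i :: r :: v)) (EV 0 :: map EV (seq 2 k))) body = den (i :: v) body.
Proof. intros Hk. cbn [map den nth]. erewrite (den_vars _ [i; r] v); eauto. Qed.

Lemma den_bex k v n body : length v = k ->
  (den v (bexE k n body) = 0 <-> exists i, i < den v n /\ den (i :: v) body = 0).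
Proof.
  intros Hk. unfold bexE. cbn [den]. induction (den v n) as [|m IH]; cbn [iter_rec].
  - split; [discriminate | intros [i [Hi _]]; lia].
  - rewrite den_mul. cbn [den nth]. rewrite den_body, Nat.mul_eq_0, IH by auto. split.
    + intros [[i [Hi Hb]]|H]; [exists i; split; auto; lia | exists m; auto].
    + intros [i [Hi Hb]]. destruct (Nat.eq_dec i m) as [->|]; auto.
      left. exists i. split; auto. lia.
Qed.

Lemma den_ball k v n body : length v = k ->
  (den v (ballE k n body) = 0 <-> forall i, i < den v n -> den (i :: v) body = 0).
Proof.
  intros Hk. unfold ballE. cbn [den]. induction (den v n) as [|m IH]; cbn [iter_rec].
  - split; auto. intros; lia.
  - rewrite den_add. cbn [den nth]. rewrite den_body by auto. split.
    + intros H i Hi. destruct (Nat.eq_dec i m) as [->|]; [lia|]. apply IH; lia.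
    + intros H. rewrite (proj2 IH) by (intros i Hi; apply H; lia).
      apply H. lia.
Qed.

Definition subsetE (a b : pexp) : pexp :=
  ECall (ballE 2 (EV 0) (orE (bitE (EV 1) (EV 0)) (memE (EV 2) (EV 0)))) [a; b].

Lemma den_subset env a b :
  den env (subsetE a b) = 0 <-> subset (D (den env a)) (D (den env b)).
Proof.
  unfold subsetE. cbn [den map]. rewrite den_ball by reflexivity. cbn [den nth].
  rewrite subset_D_bounded. split; intros H i Hi; specialize (H i Hi);
    rewrite den_or, den_bit_eq0, den_mem in *; exact H.
Qed.

Definition option_code (o : option nat) : nat := match o with Some y => S y | None => 0 end.

Fixpoint all_nonzeroE (cs : list pexp) : pexp :=
  match cs with [] => oneE | c :: cs' => ifzE c EZ (all_nonzeroE cs') end.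

Fixpoint eval_fuel_pexp (e : PR) (l : nat) : pexp :=
  match e with
  | PR_zero => oneE
  | PR_succ => match l with 0 => EZ | _ => ES (ES (EV 1)) end
  | PR_proj i => ES (EV (S i))
  | PR_comp f gs =>
      let cs := map (fun g => eval_fuel_pexp g l) gs in
      ifzE (all_nonzeroE cs) EZ (ECall (eval_fuel_pexp f (length gs)) (EV 0 :: map predE cs))
  | PR_prec f g =>
      match l with
      | 0 => EZ
      | S l' =>
          ERec (EV 1) (ECall (eval_fuel_pexp f l') (EV 0 :: map EV (seq 2 l')))
            (ifzE (EV 1) EZ
               (ECall (eval_fuel_pexp g (S (S l')))
                  (EV 2 :: EV 0 :: predE (EV 1) :: map EV (seq 4 l'))))
      end
  | PR_mu f =>
      let test := ECall (eval_fuel_pexp f (S l)) (EV 2 :: EV 0 :: map EV (seq 3 l)) in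
      predE (ERec (EV 0) EZ
               (ifzE (EV 1) (ifzE test oneE (ifzE (predE test) (ES (ES (EV 0))) EZ)) (EV 1)))
  end.

Definition eval_fuel_pexp_spec (e : PR) : Prop :=
  forall t v, den (t :: v) (eval_fuel_pexp e (length v)) = option_code (eval_fuel t e v).

Lemma all_some_length l ws : all_some l = Some ws -> length ws = length l.
Proof.
  revert ws. induction l as [|o l IH]; simpl; intros ws H.
  - injection H as <-. reflexivity.
  - destruct o; [|discriminate]. destruct (all_some l); [|discriminate].
    injection H as <-. simpl. f_equal. auto.
Qed.

Lemma den_all_nonzero gs : Forall eval_fuel_pexp_spec gs -> forall t v,
  let cs := map (fun g => eval_fuel_pexp g (length v)) gs in
  match all_some (map (fun g => eval_fuel t g v) gs) with
  | Some ws => den (t :: v) (all_nonzeroE cs) <> 0 /\ map (den (t :: v)) (map predE cs) = ws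
  | None => den (t :: v) (all_nonzeroE cs) = 0
  end.
Proof.
  intros Hgs t v. cbv zeta. induction Hgs as [|g gs Hg _ IH]; cbn [map all_some all_nonzeroE].
  - split; [discriminate | reflexivity].
  - rewrite den_ifz, den_pred, Hg. destruct (eval_fuel t g v) as [w|]; cbn [option_code]; auto.
    destruct (all_some (map (fun g => eval_fuel t g v) gs)); auto.
    destruct IH as [IHnz IHws]. split; [exact IHnz | f_equal; exact IHws].
Qed.

Lemma eval_fuel_pexp_comp f gs :
  eval_fuel_pexp_spec f -> Forall eval_fuel_pexp_spec gs -> eval_fuel_pexp_spec (PR_comp f gs).
Proof.
  intros Hf Hgs t v. cbn [eval_fuel_pexp eval_fuel]. rewrite den_ifz.
  pose proof (den_all_nonzero gs Hgs t v) as Hall. cbv zeta in *.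
  destruct (all_some (map (fun g => eval_fuel t g v) gs)) as [ws|] eqn:Ews.
  - destruct Hall as [Hnz Hws].
    destruct (den (t :: v) (all_nonzeroE _)); [congruence|].
    cbn [den map nth]. rewrite Hws.
    apply all_some_length in Ews. rewrite !length_map in Ews. rewrite <- Ews. apply Hf.
  - rewrite Hall. reflexivity.
Qed.

Lemma eval_fuel_pexp_prec f g :
  eval_fuel_pexp_spec f -> eval_fuel_pexp_spec g -> eval_fuel_pexp_spec (PR_prec f g).
Proof.
  intros Hf Hg t [|n w]; [reflexivity|]. cbn [eval_fuel_pexp eval_fuel length den nth].
  replace (map (den (t :: n :: w)) (EV 0 :: map EV (seq 2 (length w)))) with (t :: w)
    by (cbn [map den nth]; f_equal; symmetry; eapply (den_vars _ [t; n]); eauto).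
  rewrite Hf.
  match goal with |- iter_rec ?b ?step n = option_code (prec_fuel n ?B ?G) =>
    enough (Hloop : forall m, iter_rec b step m = option_code (prec_fuel m B G)) by apply Hloop
  end.
  induction m as [|m IHm]; cbn [iter_rec prec_fuel]; auto.
  rewrite IHm, den_ifz. cbn [den nth].
  destruct (prec_fuel m (eval_fuel t f w) (fun k r => eval_fuel t g (k :: r :: w)))
    as [r|]; cbn [option_code]; auto.
  rewrite <- Hg. f_equal. cbn [map den nth]. rewrite den_pred. cbn [den nth]. repeat f_equal.
  eapply (den_vars _ [m; S r; t; n]); eauto.
Qed.

Lemma eval_fuel_pexp_mu f : eval_fuel_pexp_spec f -> eval_fuel_pexp_spec (PR_mu f).
Proof.
  intros Hf t v. cbn [eval_fuel_pexp eval_fuel]. rewrite den_pred. cbn [den nth].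
  set (F := fun n => eval_fuel t f (n :: v)).
  match goal with |- Nat.pred (iter_rec 0 ?step t) = _ =>
    assert (Hloop : forall k, iter_rec 0 step k = mu_search F k)
  end.
  { intros k. induction k as [|k IHk]; cbn [iter_rec mu_search]; auto.
    rewrite IHk, !den_ifz, den_pred. cbn [den nth].
    replace (map (den (k :: mu_search F k :: t :: v)) (EV 2 :: EV 0 :: map EV (seq 3 (length v))))
      with (t :: k :: v)
      by (cbn [map den nth]; repeat f_equal; symmetry; eapply (den_vars _ [k; mu_search F k; t]); eauto).
    rewrite (Hf t (k :: v) : den _ (eval_fuel_pexp f (S (length v))) = _). fold (F k).
    destruct (mu_search F k); auto. destruct (F k) as [[|j]|]; reflexivity. }
  rewrite Hloop. destruct (mu_search F t) as [|[|n]]; reflexivity.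
Qed.

Lemma eval_fuel_pexp_correct e : eval_fuel_pexp_spec e.
Proof.
  induction e using PR_nested_ind.
  - intros t v. reflexivity.
  - intros t [|x v]; reflexivity.
  - intros t v. reflexivity.
  - apply eval_fuel_pexp_comp; assumption.
  - apply eval_fuel_pexp_prec; assumption.
  - apply eval_fuel_pexp_mu; assumption.
Qed.

(* [R] is Σ⁰₁ in positive information about [Y]: a primitive recursive matrix
   with an unbounded witness [s] and a finite subset [D w] of [Y]. *)
Definition sigma1 (Y : nat -> Prop) (k : nat) (R : list nat -> Prop) : Prop :=
  exists P : pexp, forall v, length v = k ->
    (R v <-> exists s w, den (s :: w :: v) P = 0 /\ subset (D w) Y).

Section Sigma1.

Variable Y : nat -> Prop.

Lemma sigma1_ext k (R R' : list nat -> Prop) :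
  (forall v, length v = k -> (R v <-> R' v)) -> sigma1 Y k R -> sigma1 Y k R'.
Proof. intros H [P HP]. exists P. intros v Hv. rewrite <- H by exact Hv. auto. Qed.

Lemma sigma1_dec k Q : sigma1 Y k (fun v => den v Q = 0).
Proof.
  exists (shiftE 2 k Q). intros v Hv.
  assert (Hshift : forall s w, den (s :: w :: v) (shiftE 2 k Q) = den v Q)
    by (intros; eapply (den_shift _ [s; w]); eauto).
  split.
  - intros H. exists 0, 0. rewrite Hshift. split; [exact H | apply subset_D0].
  - intros [s [w [H _]]]. rewrite Hshift in H. exact H.
Qed.

Lemma sigma1_mem k t : sigma1 Y k (fun v => Y (den v t)).
Proof.
  exists (memE (EV 1) (shiftE 2 k t)). intros v Hv.
  assert (Hshift : forall s w, den (s :: w :: v) (shiftE 2 k t) = den v t)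
    by (intros; eapply (den_shift _ [s; w]); eauto).
  split.
  - intros H. exists 0, (2 ^ den v t). rewrite den_mem. cbn [den nth]. rewrite Hshift.
    split; [apply D_pow; reflexivity|]. intros i Hi. apply D_pow in Hi. subst. exact H.
  - intros [s [w [Hmem Hw]]]. rewrite den_mem in Hmem. cbn [den nth] in Hmem.
    rewrite Hshift in Hmem. apply Hw, Hmem.
Qed.

Lemma sigma1_or k R1 R2 :
  sigma1 Y k R1 -> sigma1 Y k R2 -> sigma1 Y k (fun v => R1 v \/ R2 v).
Proof.
  intros [P1 H1] [P2 H2]. exists (orE P1 P2). intros v Hv. rewrite (H1 v Hv), (H2 v Hv).
  split.
  - intros [[s [w [Hs Hw]]]|[s [w [Hs Hw]]]]; exists s, w; rewrite den_or; auto.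
  - intros [s [w [Hs Hw]]]. apply den_or in Hs as [Hs|Hs]; [left|right]; exists s, w; auto.
Qed.

(* Two witnesses are merged into their sum and the union of their finite sets;
   the matrix recovers them by bounded search, using that [D a ⊆ D b] forces [a <= b]. *)
Lemma sigma1_and k R1 R2 :
  sigma1 Y k R1 -> sigma1 Y k R2 -> sigma1 Y k (fun v => R1 v /\ R2 v).
Proof.
  intros [P1 H1] [P2 H2].
  set (body := andE (subsetE (EV 1) (EV 5)) (andE (subsetE (EV 0) (EV 5))
        (andE (ECall P1 (EV 3 :: EV 1 :: map EV (seq 6 k)))
              (ECall P2 (EV 2 :: EV 0 :: map EV (seq 6 k)))))).
  exists (bexE (S (S k)) (ES (EV 0)) (bexE (S (S (S k))) (ES (EV 1))
           (bexE (S (S (S (S k)))) (ES (EV 3)) (bexE (S (S (S (S (S k))))) (ES (EV 4)) body)))).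
  intros v Hv. rewrite (H1 v Hv), (H2 v Hv).
  assert (Hbody : forall s w s1 s2 w1 w2,
     den (w2 :: w1 :: s2 :: s1 :: s :: w :: v) body = 0 <->
     subset (D w1) (D w) /\ subset (D w2) (D w) /\
     den (s1 :: w1 :: v) P1 = 0 /\ den (s2 :: w2 :: v) P2 = 0).
  { intros. unfold body. rewrite !den_and, !den_subset. cbn [den nth map].
    rewrite (den_vars _ [w2; w1; s2; s1; s; w] v 6 k) by auto. tauto. }
  split.
  - intros [[s1 [w1 [Hs1 Hw1]]] [s2 [w2 [Hs2 Hw2]]]].
    exists (s1 + s2), (Nat.lor w1 w2). split; [|apply subset_D_lor; auto].
    pose proof (subset_D_le _ _ (subset_D_lor_l w1 w2)).
    pose proof (subset_D_le _ _ (subset_D_lor_r w1 w2)).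
    rewrite den_bex by (simpl; lia). exists s1. split; [cbn [den nth]; lia|].
    rewrite den_bex by (simpl; lia). exists s2. split; [cbn [den nth]; lia|].
    rewrite den_bex by (simpl; lia). exists w1. split; [cbn [den nth]; lia|].
    rewrite den_bex by (simpl; lia). exists w2. split; [cbn [den nth]; lia|].
    apply Hbody. auto using subset_D_lor_l, subset_D_lor_r.
  - intros [s [w [H Hw]]].
    rewrite den_bex in H by (simpl; lia). destruct H as [s1 [_ H]].
    rewrite den_bex in H by (simpl; lia). destruct H as [s2 [_ H]].
    rewrite den_bex in H by (simpl; lia). destruct H as [w1 [_ H]].
    rewrite den_bex in H by (simpl; lia). destruct H as [w2 [_ H]].
    apply Hbody in H as [Hw1 [Hw2 [Hs1 Hs2]]].
    split; [exists s1, w1 | exists s2, w2]; eauto using subset_trans.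
Qed.

Lemma sigma1_ex k R : sigma1 Y (S k) R -> sigma1 Y k (fun v => exists x, R (x :: v)).
Proof.
  intros [P H].
  set (body := ECall P (EV 1 :: EV 3 :: EV 0 :: map EV (seq 4 k))).
  exists (bexE (S (S k)) (ES (EV 0)) (bexE (S (S (S k))) (ES (EV 1)) body)).
  intros v Hv.
  assert (Hbody : forall x s' s w, den (x :: s' :: s :: w :: v) body = den (s' :: w :: x :: v) P).
  { intros. unfold body. cbn [den map nth].
    rewrite (den_vars _ [x; s'; s; w] v 4 k) by auto. reflexivity. }
  split.
  - intros [x Hx]. apply H in Hx as [s' [w [Hs' Hw]]]; [|simpl; lia].
    exists (s' + x), w. split; [|exact Hw].
    rewrite den_bex by (simpl; lia). exists s'. split; [cbn [den nth]; lia|].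
    rewrite den_bex by (simpl; lia). exists x. split; [cbn [den nth]; lia|].
    rewrite Hbody. exact Hs'.
  - intros [s [w [Hs Hw]]].
    rewrite den_bex in Hs by (simpl; lia). destruct Hs as [s' [_ Hs]].
    rewrite den_bex in Hs by (simpl; lia). destruct Hs as [x [_ Hs]].
    rewrite Hbody in Hs. exists x. apply H; [simpl; lia|]. eauto.
Qed.

Lemma finite_choice_D n (Q : nat -> nat -> nat -> Prop) :
  (forall i, i < n -> exists s w, Q i s w /\ subset (D w) Y) ->
  exists S W, subset (D W) Y /\
    forall i, i < n -> exists s w, s <= S /\ subset (D w) (D W) /\ Q i s w.
Proof.
  induction n as [|n IH]; intros H.
  - exists 0, 0. split; [apply subset_D0 | intros; lia].
  - destruct IH as [S0 [W0 [HW0 HQ]]]; [intros; apply H; lia|].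
    destruct (H n) as [s [w [Hq Hw]]]; [lia|].
    exists (S0 + s), (Nat.lor W0 w). split; [apply subset_D_lor; auto|].
    intros i Hi. destruct (Nat.eq_dec i n) as [->|].
    + exists s, w. split; [lia|]. split; [apply subset_D_lor_r | exact Hq].
    + destruct (HQ i ltac:(lia)) as [s' [w' [Hs' [Hw' Hq']]]]. exists s', w'.
      split; [lia|]. split; [eapply subset_trans; [exact Hw' | apply subset_D_lor_l] | exact Hq'].
Qed.

Lemma sigma1_ball k R t :
  sigma1 Y (S k) R -> sigma1 Y k (fun v => forall i, i < den v t -> R (i :: v)).
Proof.
  intros [P H].
  set (body := andE (subsetE (EV 0) (EV 4)) (ECall P (EV 1 :: EV 0 :: EV 2 :: map EV (seq 5 k)))).
  exists (ballE (S (S k)) (shiftE 2 k t)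
            (bexE (S (S (S k))) (ES (EV 1)) (bexE (S (S (S (S k)))) (ES (EV 3)) body))).
  intros v Hv.
  assert (Hshift : forall s w, den (s :: w :: v) (shiftE 2 k t) = den v t)
    by (intros; eapply (den_shift _ [s; w]); eauto).
  assert (Hbody : forall w' s' i s w, den (w' :: s' :: i :: s :: w :: v) body = 0 <->
      subset (D w') (D w) /\ den (s' :: w' :: i :: v) P = 0).
  { intros. unfold body. rewrite den_and, den_subset. cbn [den nth map].
    rewrite (den_vars _ [w'; s'; i; s; w] v 5 k) by auto. tauto. }
  split.
  - intros HR.
    destruct (finite_choice_D (den v t) (fun i s w => den (s :: w :: i :: v) P = 0))
      as [S0 [W0 [HW HQ]]].
    { intros i Hi. apply H; [simpl; lia | auto]. }
    exists S0, W0. split; [|exact HW].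
    rewrite den_ball, Hshift by (simpl; lia). intros i Hi.
    destruct (HQ i Hi) as [s' [w' [Hs' [Hw' Hq]]]].
    pose proof (subset_D_le _ _ Hw').
    rewrite den_bex by (simpl; lia). exists s'. split; [cbn [den nth]; lia|].
    rewrite den_bex by (simpl; lia). exists w'. split; [cbn [den nth]; lia|].
    apply Hbody. auto.
  - intros [s [w [Hs Hw]]] i Hi.
    rewrite den_ball, Hshift in Hs by (simpl; lia). specialize (Hs i Hi).
    rewrite den_bex in Hs by (simpl; lia). destruct Hs as [s' [_ Hs]].
    rewrite den_bex in Hs by (simpl; lia). destruct Hs as [w' [_ Hs]].
    apply Hbody in Hs as [Hw' Hs].
    apply H; [simpl; lia|]. exists s', w'. eauto using subset_trans.
Qed.

Lemma sigma1_subst m k R ts : sigma1 Y m R -> length ts = m ->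
  sigma1 Y k (fun v => R (map (den v) ts)).
Proof.
  intros [P H] Hts. exists (ECall P (EV 0 :: EV 1 :: map (shiftE 2 k) ts)).
  intros v Hv.
  assert (Hcall : forall s w, den (s :: w :: v) (ECall P (EV 0 :: EV 1 :: map (shiftE 2 k) ts))
        = den (s :: w :: map (den v) ts) P).
  { intros. cbn [den map nth]. rewrite map_map. do 3 f_equal.
    apply map_ext. intros. eapply (den_shift _ [s; w]); eauto. }
  rewrite H by (rewrite length_map; exact Hts).
  split; intros [s [w [Hs Hw]]]; exists s, w; rewrite Hcall in *; auto.
Qed.

Lemma sigma1_halts e k : sigma1 Y k (fun v => exists y, eval e v y).
Proof.
  exists (ifzE (ECall (eval_fuel_pexp e k) (EV 0 :: map EV (seq 2 k))) oneE EZ).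
  intros v Hv.
  assert (Hfuel : forall s w,
    den (s :: w :: v) (ECall (eval_fuel_pexp e k) (EV 0 :: map EV (seq 2 k)))
    = option_code (eval_fuel s e v)).
  { intros. cbn [den map nth]. rewrite (den_vars _ [s; w] v 2 k) by auto.
    subst k. apply eval_fuel_pexp_correct. }
  split.
  - intros [y Hy]. destruct (eval_fuel_complete _ _ _ Hy) as [t Ht]. exists t, 0.
    split; [|apply subset_D0]. rewrite den_ifz, Hfuel, Ht by lia. reflexivity.
  - intros [s [w [Hs _]]]. rewrite den_ifz, Hfuel in Hs.
    destruct (eval_fuel s e v) as [y|] eqn:Ey; [|discriminate].
    exists y. eapply eval_fuel_sound; eauto.
Qed.

Lemma sigma1_subset_D k R t :
  sigma1 Y (S k) R -> sigma1 Y k (fun v => subset (D (den v t)) (fun i => R (i :: v))).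
Proof.
  intros HR.
  eapply sigma1_ext; [intros v _; symmetry; apply subset_D_bounded|].
  apply (sigma1_ball _ (fun v => ~ D (den (tl v) t) (hd 0 v) \/ R v)), sigma1_or; [|exact HR].
  eapply sigma1_ext; [|apply (sigma1_dec _ (bitE (shiftE 1 k t) (EV 0)))].
  intros [|i v] Hv; [discriminate|]. simpl in Hv.
  rewrite den_bit_eq0. cbn [den nth]. erewrite (den_shift _ [i] v); eauto. reflexivity.
Qed.

End Sigma1.

Definition sigma1_set (Y A : nat -> Prop) : Prop := sigma1 Y 1 (fun v => A (hd 0 v)).

Lemma halts_mu_compile Q v :
  (exists y, eval (PR_mu (compile (S (length v)) Q)) v y) <-> exists s, den (s :: v) Q = 0.
Proof.
  split.
  - intros [y Hy]. inversion Hy as [| | | | | | f v' n Hzero]; subst.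
    exists y. eapply eval_deterministic; [apply (compile_correct Q (y :: v)) | exact Hzero].
  - intros Hex.
    destruct (dec_inh_nat_subset_has_unique_least_element (fun s => den (s :: v) Q = 0))
      as [n [[Hn Hleast] _]]; [intros; lia | exact Hex |].
    exists n. constructor.
    + rewrite <- Hn. apply (compile_correct Q (n :: v)).
    + intros m Hm. destruct (den (m :: v) Q) as [|j] eqn:Em.
      * specialize (Hleast m Em). lia.
      * exists j. rewrite <- Em. apply (compile_correct Q (m :: v)).
Qed.

Lemma sigma1_set_enum_le Y A : sigma1_set Y A -> enum_le A Y.
Proof.
  intros [P H].
  exists (fun x u => exists s, den [s; u; x] P = 0). split.
  - exists (PR_mu (compile 3 (ECall P [EV 0; EV 2; EV 1]))). intros x u.
    rewrite (halts_mu_compile (ECall P [EV 0; EV 2; EV 1]) [x; u]). reflexivity.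
  - intros x. rewrite (H [x]) by reflexivity. split.
    + intros [s [w [Hs Hw]]]. eauto.
    + intros [u [[s Hs] Hu]]. eauto.
Qed.

Lemma sigma1_set_ce A : sigma1_set (fun _ => False) A -> ce A.
Proof.
  intros [P H]. exists (PR_mu (compile 2 (ECall P [EV 0; EZ; EV 1]))). intros x.
  rewrite (halts_mu_compile (ECall P [EV 0; EZ; EV 1]) [x]), (H [x]) by reflexivity. split.
  - intros [s [w [Hs Hw]]]. apply D_empty in Hw. subst. exists s. exact Hs.
  - intros [s Hs]. exists s, 0. split; [exact Hs | apply subset_D0].
Qed.

(* [F n m] reads [m ∈ F n]; the environment is [[m; n]], element first. *)
Definition sigma1_family (Y : nat -> Prop) (F : nat -> nat -> Prop) : Prop :=
  sigma1 Y 2 (fun v => F (nth 1 v 0) (nth 0 v 0)).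

Lemma sigma1_family_gapp Y F G :
  sigma1_family Y F -> sigma1_family Y G -> sigma1_family Y (fun n => gapp (F n) (G n)).
Proof.
  intros HF HG.
  assert (HFpair : sigma1 Y 3 (fun v => F (nth 2 v 0) (pair (nth 1 v 0) (nth 0 v 0)))).
  { eapply sigma1_ext; [|apply (sigma1_subst _ 2 3 _ [pairE (EV 1) (EV 0); EV 2] HF eq_refl)].
    intros v _. cbn [map nth]. rewrite den_pair. reflexivity. }
  assert (HGsub : sigma1 Y 3 (fun v => subset (D (nth 0 v 0)) (G (nth 2 v 0)))).
  { eapply sigma1_ext; [|apply (sigma1_subset_D _ _ _ (EV 0)
                                  (sigma1_subst _ 2 4 _ [EV 0; EV 3] HG eq_refl))].
    intros v _. reflexivity. }
  eapply sigma1_ext; [|apply sigma1_ex, sigma1_and; [exact HFpair | exact HGsub]].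
  intros v _. reflexivity.
Qed.

Lemma sigma1_family_const Y A : sigma1_set Y A -> sigma1_family Y (fun _ => A).
Proof.
  intros HA. eapply sigma1_ext; [|apply (sigma1_subst _ 1 2 _ [EV 0] HA eq_refl)].
  intros [|x v] _; reflexivity.
Qed.

Lemma sigma1_family_at Y F m : sigma1_family Y F -> sigma1_set Y (fun n => F n m).
Proof.
  intros HF. eapply sigma1_ext; [|apply (sigma1_subst _ 2 1 _ [constE m; EV 0] HF eq_refl)].
  intros [|x v] _; cbn [map den nth hd]; rewrite den_const; reflexivity.
Qed.

Lemma sigma1_family_fiber Y F n : sigma1_family Y F -> sigma1_set Y (F n).
Proof.
  intros HF. eapply sigma1_ext; [|apply (sigma1_subst _ 2 1 _ [EV 0; constE n] HF eq_refl)].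
  intros [|x v] _; cbn [map den nth hd]; rewrite den_const; reflexivity.
Qed.

Lemma sigma1_set_inG Y A : inG Y A -> sigma1_set Y A.
Proof.
  induction 1 as [A HA | A [e He] | A B C _ IHB _ IHC HA].
  - eapply sigma1_ext; [|apply (sigma1_mem _ 1 (EV 0))].
    intros [|x [|]] Hv; try discriminate. symmetry. apply HA.
  - eapply sigma1_ext; [|apply (sigma1_halts _ e 1)].
    intros [|x [|]] Hv; try discriminate. symmetry. apply He.
  - eapply sigma1_ext; [intros v _; symmetry; apply HA|].
    apply (sigma1_family_fiber _ (fun _ => gapp B C) 0).
    apply sigma1_family_gapp; apply sigma1_family_const; assumption.
Qed.

Fixpoint iter_app (Z Succ : nat -> Prop) (n : nat) : nat -> Prop :=
  match n with 0 => Z | S n' => gapp Succ (iter_app Z Succ n') end.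

Section IterCertificate.

Variables Z Succ : nat -> Prop.

Definition justified (w j m : nat) : Prop :=
  (j = 0 /\ Z m) \/
  (j <> 0 /\ exists u, Succ (pair m u) /\ subset (D u) (fun i => D w (pair (pred j) i))).

(* [w] codes a finite set of pairs [(j, m)], each derived from pairs of [w] at
   level [j - 1]: a finite derivation of facts [m ∈ iter_app Z Succ j]. *)
Definition iter_certificate (w : nat) : Prop :=
  forall j m, D w (pair j m) -> justified w j m.

Lemma iter_certificate_sound w n m :
  iter_certificate w -> D w (pair n m) -> iter_app Z Succ n m.
Proof.
  intros Hw. revert m. induction n as [|n IH]; intros m Hnm;
    destruct (Hw _ _ Hnm) as [[Hj Hm]|[Hj [u [Hu Hsub]]]]; try lia; simpl; auto.
  exists u. split; [exact Hu|]. intros i Hi. apply IH, Hsub, Hi.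
Qed.

Lemma justified_mono w w' j m :
  subset (D w) (D w') -> justified w j m -> justified w' j m.
Proof.
  intros Hww' [H|[Hj [u [Hu Hsub]]]]; [left; exact H | right; split; [exact Hj|]].
  exists u. split; [exact Hu|]. intros i Hi. apply Hww', Hsub, Hi.
Qed.

Lemma iter_certificate_lor w1 w2 :
  iter_certificate w1 -> iter_certificate w2 -> iter_certificate (Nat.lor w1 w2).
Proof.
  intros H1 H2 j m Hjm. apply D_lor in Hjm as [Hjm|Hjm].
  - eapply justified_mono; [apply subset_D_lor_l | apply H1, Hjm].
  - eapply justified_mono; [apply subset_D_lor_r | apply H2, Hjm].
Qed.

Lemma iter_certificate_union n u :
  (forall i, D u i -> exists w, iter_certificate w /\ D w (pair n i)) ->
  exists W, iter_certificate W /\ forall i, D u i -> D W (pair n i).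
Proof.
  intros H.
  enough (Hbelow : forall b, exists W, iter_certificate W /\
            forall i, i < b -> D u i -> D W (pair n i)).
  { destruct (Hbelow u) as [W [HW HuW]]. exists W. split; [exact HW|].
    intros i Hi. apply HuW; [apply D_lt|]; exact Hi. }
  induction b as [|b [W [HW HuW]]].
  - exists 0. split; [intros j m Hjm; apply (subset_D0 (fun _ => False)) in Hjm; contradiction | intros; lia].
  - destruct (Nat.testbit u b) eqn:Hb.
    + destruct (H b Hb) as [w [Hw Hwb]]. exists (Nat.lor W w).
      split; [apply iter_certificate_lor; assumption|].
      intros i Hi Hui. apply D_lor.
      destruct (Nat.eq_dec i b) as [->|]; [right; exact Hwb | left; apply HuW; auto; lia].
    + exists W. split; [exact HW|]. intros i Hi Hui.
      destruct (Nat.eq_dec i b) as [->|]; [unfold D in Hui; congruence | apply HuW; auto; lia].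
Qed.

Lemma iter_certificate_complete n m :
  iter_app Z Succ n m -> exists w, iter_certificate w /\ D w (pair n m).
Proof.
  revert m. induction n as [|n IH]; intros m Hm; simpl in Hm.
  - exists (2 ^ pair 0 m). split; [|apply D_pow; reflexivity].
    intros j m' Hjm. apply D_pow, pair_inj in Hjm as [-> ->]. left. auto.
  - destruct Hm as [u [Hu Hsub]].
    destruct (iter_certificate_union n u) as [W [HW HuW]]; [intros i Hi; apply IH, Hsub, Hi|].
    exists (Nat.lor W (2 ^ pair (S n) m)).
    split; [|apply D_lor; right; apply D_pow; reflexivity].
    intros j m' Hjm. apply D_lor in Hjm as [Hjm|Hjm].
    + eapply justified_mono; [apply subset_D_lor_l | apply HW, Hjm].
    + apply D_pow, pair_inj in Hjm as [-> ->]. right. split; [lia|].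
      exists u. split; [exact Hu|]. intros i Hi. apply D_lor. left. apply HuW, Hi.
Qed.

Variable Y : nat -> Prop.
Hypotheses (HZ : sigma1_set Y Z) (HSucc : sigma1_set Y Succ).

Lemma sigma1_justified : sigma1 Y 3 (fun v => justified (nth 2 v 0) (nth 1 v 0) (nth 0 v 0)).
Proof.
  apply sigma1_or, sigma1_and.
  - apply sigma1_and.
    + apply (sigma1_dec _ _ (EV 1)).
    + eapply sigma1_ext; [|apply (sigma1_subst _ 1 3 _ [EV 0] HZ eq_refl)]. reflexivity.
  - eapply sigma1_ext; [|apply (sigma1_dec _ _ (ifzE (EV 1) oneE EZ))].
    intros v _. cbv beta. rewrite den_ifz. cbn [den]. destruct (nth 1 v 0); cbn; intuition lia.
  - apply (sigma1_ex _ _ (fun v => Succ (pair (nth 1 v 0) (nth 0 v 0)) /\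
             subset (D (nth 0 v 0)) (fun i => D (nth 3 v 0) (pair (pred (nth 2 v 0)) i)))).
    apply sigma1_and.
    + eapply sigma1_ext; [|apply (sigma1_subst _ 1 4 _ [pairE (EV 1) (EV 0)] HSucc eq_refl)].
      intros v _. cbn [map hd]. rewrite den_pair. reflexivity.
    + eapply sigma1_ext; [|apply (sigma1_subset_D _ _ _ (EV 0) (sigma1_dec _ _
                                   (memE (EV 4) (pairE (predE (EV 3)) (EV 0)))))].
      intros v _. cbn [den]. split; intros H i Hi; apply H in Hi;
        rewrite den_mem, den_pair, den_pred in *; exact Hi.
Qed.

Lemma sigma1_iter_certificate : sigma1_set Y iter_certificate.
Proof.
  assert (Hbounded : forall w, iter_certificate w <-> forall j, j < w -> forall m, m < w ->
            ~ D w (pair j m) \/ justified w j m).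
  { intros w. split.
    - intros Hw j _ m _. unfold D at 1.
      destruct (Nat.testbit w (pair j m)) eqn:E; [right; apply Hw, E | left; congruence].
    - intros Hw j m Hjm. pose proof (D_lt _ _ Hjm). pose proof (pair_ge j m).
      destruct (Hw j ltac:(lia) m ltac:(lia)); tauto. }
  set (B := fun v => ~ D (nth 2 v 0) (pair (nth 1 v 0) (nth 0 v 0)) \/
                    justified (nth 2 v 0) (nth 1 v 0) (nth 0 v 0)).
  assert (HB : sigma1 Y 3 B).
  { apply sigma1_or; [|exact sigma1_justified].
    eapply sigma1_ext; [|apply (sigma1_dec _ _ (bitE (EV 2) (pairE (EV 1) (EV 0))))].
    intros v _. cbv beta. rewrite den_bit_eq0, den_pair. reflexivity. }
  eapply sigma1_ext; [|exact (sigma1_ball _ _ _ (EV 0) (sigma1_ball _ _ _ (EV 1) HB))].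
  intros [|w []] Hv; try discriminate. rewrite Hbounded. reflexivity.
Qed.

Lemma sigma1_family_iter_app : sigma1_family Y (iter_app Z Succ).
Proof.
  assert (Hcert : sigma1 Y 2 (fun v =>
            exists w, iter_certificate w /\ D w (pair (nth 1 v 0) (nth 0 v 0)))).
  { apply (sigma1_ex _ _ (fun v => iter_certificate (nth 0 v 0) /\
                                   D (nth 0 v 0) (pair (nth 2 v 0) (nth 1 v 0)))).
    apply sigma1_and.
    - eapply sigma1_ext; [|apply (sigma1_subst _ 1 3 _ [EV 0] sigma1_iter_certificate eq_refl)].
      reflexivity.
    - eapply sigma1_ext; [|apply (sigma1_dec _ _ (memE (EV 0) (pairE (EV 2) (EV 1))))].
      intros v _. cbv beta. rewrite den_mem, den_pair. reflexivity. }
  eapply sigma1_ext; [|exact Hcert]. intros v _. split.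
  - intros [w [Hw Hnm]]. eapply iter_certificate_sound; eauto.
  - apply iter_certificate_complete.
Qed.

End IterCertificate.

Lemma set_ext (P Q : nat -> Prop) : (forall x, P x <-> Q x) -> P = Q.
Proof.
  intros H. apply functional_extensionality. intros x. apply propositional_extensionality, H.
Qed.

Lemma gapp_iff_l (A A' B : nat -> Prop) x :
  (forall z, A z <-> A' z) -> (gapp A B x <-> gapp A' B x).
Proof. intros H. unfold gapp. split; intros [u [Hu Hsub]]; exists u; split; auto; apply H, Hu. Qed.

Lemma enum_le_inG A Y : enum_le A Y -> inG Y A.
Proof.
  intros [R [[e He] HR]].
  set (Phi := fun z => exists x u, z = pair x u /\ R x u).
  assert (HPhi : ce Phi).
  { apply sigma1_set_ce.
    assert (Hgraph : sigma1 (fun _ => False) 3 (fun v =>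
              nth 2 v 0 = pair (nth 1 v 0) (nth 0 v 0) /\ R (nth 1 v 0) (nth 0 v 0))).
    { apply sigma1_and.
      - eapply sigma1_ext; [|apply (sigma1_dec _ 3 (eqE (EV 2) (pairE (EV 1) (EV 0))))].
        intros v _. cbv beta. rewrite den_eq, den_pair. reflexivity.
      - eapply sigma1_ext; [|apply (sigma1_subst _ 2 3 _ [EV 1; EV 0] (sigma1_halts _ e 2) eq_refl)].
        intros v _. cbn [map den]. symmetry. apply He. }
    eapply sigma1_ext; [|exact (sigma1_ex _ _ _ (sigma1_ex _ _ _ Hgraph))].
    intros [|z []] Hv; try discriminate. reflexivity. }
  apply (G_app Y A Phi Y (G_ce Y Phi HPhi) (G_base Y Y (fun n => iff_refl _))).
  intros n. rewrite HR. unfold gapp, Phi. split.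
  - intros [u [Hu Hsub]]. exists u. eauto.
  - intros [u [[x [u' [Hxu Hu']]] Hsub]]. apply pair_inj in Hxu as [<- <-]. eauto.
Qed.

Lemma inG_mono X Y A : enum_le X Y -> inG X A -> inG Y A.
Proof.
  intros HXY. induction 1 as [A HA | A HA | A B C _ IHB _ IHC HA].
  - apply enum_le_inG. destruct HXY as [R [HR HXR]].
    exists R. split; [exact HR|]. intros x. rewrite HA. apply HXR.
  - apply G_ce, HA.
  - exact (G_app Y A B C IHB IHC HA).
Qed.

Lemma ce_empty : ce (fun _ => False).
Proof.
  apply sigma1_set_ce. eapply sigma1_ext; [|apply (sigma1_dec _ 1 oneE)].
  intros v _. cbn. split; [discriminate | contradiction].
Qed.

Lemma ce_full : ce (fun _ => True).
Proof.
  apply sigma1_set_ce. eapply sigma1_ext; [|apply (sigma1_dec _ 1 EZ)].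
  intros v _. cbn. tauto.
Qed.

Lemma identity_embedding X Y : enum_le X Y -> embedding X Y (fun A => A).
Proof.
  intros HXY. split; [|split]; auto. intros A HA. apply (inG_mono X); assumption.
Qed.

Lemma identity_not_order_reversing X : ~ order_reversing X (fun A => A).
Proof.
  intros Hrev.
  exact (Hrev (fun _ => False) (fun _ => True) (G_ce X _ ce_empty) (G_ce X _ ce_full)
           (fun _ _ => I) 0 I).
Qed.

Definition zero_comb : nat -> Prop := fun m => m = 0.
Definition succ_comb : nat -> Prop := fun z => exists m, z = pair (S m) (2 ^ m).
Definition numeral (n : nat) : nat -> Prop := iter_app zero_comb succ_comb n.

(* Chosen so that [select_comb · {n} · X · A · B = A ∪ {x ∈ B | n ∈ X}]: the first
   kind of code lets the elements of [A] through whatever [X] and [B] are, the second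
   one first tests [n ∈ X] and then lets the elements of [B] through. *)
Definition select_comb : nat -> Prop := fun z => exists i n,
  z = pair (pair (pair (pair i 0) (2 ^ i)) 0) (2 ^ n) \/
  z = pair (pair (pair (pair i (2 ^ i)) 0) (2 ^ n)) (2 ^ n).

Definition app4 (V N X A B : nat -> Prop) : nat -> Prop := gapp (gapp (gapp (gapp V N) X) A) B.

Lemma ce_zero_comb : ce zero_comb.
Proof.
  apply sigma1_set_ce. eapply sigma1_ext; [|apply (sigma1_dec _ 1 (EV 0))].
  intros [|x []] Hv; try discriminate. reflexivity.
Qed.

Lemma ce_succ_comb : ce succ_comb.
Proof.
  apply sigma1_set_ce.
  assert (Hgraph : sigma1 (fun _ => False) 2 (fun v =>
            nth 1 v 0 = pair (S (nth 0 v 0)) (2 ^ nth 0 v 0))).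
  { eapply sigma1_ext; [|apply (sigma1_dec _ 2 (eqE (EV 1) (pairE (ES (EV 0)) (powE (EV 0)))))].
    intros v _. cbv beta. rewrite den_eq, den_pair, den_pow. reflexivity. }
  eapply sigma1_ext; [|exact (sigma1_ex _ _ _ Hgraph)].
  intros [|x []] Hv; try discriminate. reflexivity.
Qed.

Lemma ce_select_comb : ce select_comb.
Proof.
  apply sigma1_set_ce.
  assert (Hgraph : sigma1 (fun _ => False) 3 (fun v =>
     nth 2 v 0 = pair (pair (pair (pair (nth 1 v 0) 0) (2 ^ nth 1 v 0)) 0) (2 ^ nth 0 v 0) \/
     nth 2 v 0 = pair (pair (pair (pair (nth 1 v 0) (2 ^ nth 1 v 0)) 0) (2 ^ nth 0 v 0))
                      (2 ^ nth 0 v 0))).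
  { apply sigma1_or.
    - eapply sigma1_ext; [|apply (sigma1_dec _ 3 (eqE (EV 2)
        (pairE (pairE (pairE (pairE (EV 1) EZ) (powE (EV 1))) EZ) (powE (EV 0)))))].
      intros v _. cbv beta. rewrite den_eq, !den_pair, !den_pow. reflexivity.
    - eapply sigma1_ext; [|apply (sigma1_dec _ 3 (eqE (EV 2)
        (pairE (pairE (pairE (pairE (EV 1) (powE (EV 1))) EZ) (powE (EV 0))) (powE (EV 0)))))].
      intros v _. cbv beta. rewrite den_eq, !den_pair, !den_pow. reflexivity. }
  eapply sigma1_ext; [|exact (sigma1_ex _ _ _ (sigma1_ex _ _ _ Hgraph))].
  intros [|x []] Hv; try discriminate. reflexivity.
Qed.

Lemma numeral_spec n m : numeral n m <-> m = n.
Proof.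
  revert m. induction n as [|n IH]; intros m; [reflexivity|]. unfold numeral; cbn [iter_app]. fold (numeral n).
  unfold gapp, succ_comb. split.
  - intros [u [[m' Hm'] Hsub]]. apply pair_inj in Hm' as [-> ->].
    f_equal. apply IH, Hsub, D_pow. reflexivity.
  - intros ->. exists (2 ^ n). split; [exists n; reflexivity|].
    intros i Hi. apply D_pow in Hi as ->. apply IH. reflexivity.
Qed.

Lemma select_comb_app1 n j : gapp select_comb (numeral n) j <->
  (exists i, j = pair (pair (pair i 0) (2 ^ i)) 0) \/
  (exists i, j = pair (pair (pair i (2 ^ i)) 0) (2 ^ n)).
Proof.
  unfold gapp, select_comb. split.
  - intros [u [[i [n' [H|H]]] Hsub]]; apply pair_inj in H as [-> ->];
      assert (Hn : numeral n n') by (apply Hsub, D_pow; reflexivity);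
      apply numeral_spec in Hn as ->; eauto.
  - intros [[i ->]|[i ->]]; exists (2 ^ n); (split; [exists i, n; auto|]);
      intros x Hx; apply D_pow in Hx as ->; apply numeral_spec; reflexivity.
Qed.

Lemma select_comb_app2 X n m : gapp (gapp select_comb (numeral n)) X m <->
  (exists i, m = pair (pair i 0) (2 ^ i)) \/ (X n /\ exists i, m = pair (pair i (2 ^ i)) 0).
Proof.
  rewrite (gapp_iff_l _ _ X m (select_comb_app1 n)). unfold gapp. split.
  - intros [u [[[i H]|[i H]] Hsub]]; apply pair_inj in H as [-> ->]; eauto.
    right. split; [apply Hsub, D_pow; reflexivity | eauto].
  - intros [[i ->]|[HXn [i ->]]].
    + exists 0. split; [left; eauto | apply subset_D0].
    + exists (2 ^ n). split; [right; eauto|]. intros x Hx. apply D_pow in Hx as ->. exact HXn.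
Qed.

Lemma select_comb_app3 X A n j : gapp (gapp (gapp select_comb (numeral n)) X) A j <->
  (exists i, j = pair i 0 /\ A i) \/ (X n /\ exists i, j = pair i (2 ^ i)).
Proof.
  rewrite (gapp_iff_l _ _ A j (select_comb_app2 X n)). unfold gapp. split.
  - intros [u [[[i H]|[HXn [i H]]] Hsub]]; apply pair_inj in H as [-> ->]; eauto.
    left. exists i. split; [reflexivity | apply Hsub, D_pow; reflexivity].
  - intros [[i [-> HAi]]|[HXn [i ->]]].
    + exists (2 ^ i). split; [left; eauto|]. intros x Hx. apply D_pow in Hx as ->. exact HAi.
    + exists 0. split; [right; eauto | apply subset_D0].
Qed.

Lemma select_comb_spec X A B n x :
  app4 select_comb (numeral n) X A B x <-> A x \/ (X n /\ B x).
Proof.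
  unfold app4. rewrite (gapp_iff_l _ _ B x (select_comb_app3 X A n)). unfold gapp. split.
  - intros [u [[[i [H HAi]]|[HXn [i H]]] Hsub]]; apply pair_inj in H as [-> ->]; auto.
    right. split; [exact HXn | apply Hsub, D_pow; reflexivity].
  - intros [HAx|[HXn HBx]].
    + exists 0. split; [left; eauto | apply subset_D0].
    + exists (2 ^ x). split; [right; eauto|]. intros y Hy. apply D_pow in Hy as ->. exact HBx.
Qed.

Lemma select_numeral_mem X A B n :
  subset A B -> X n -> app4 select_comb (numeral n) X A B = B.
Proof. intros HAB HXn. apply set_ext. intros x. rewrite select_comb_spec. intuition. Qed.

Lemma select_numeral_nonmem X A B n :
  ~ X n -> app4 select_comb (numeral n) X A B = A.
Proof. intros HXn. apply set_ext. intros x. rewrite select_comb_spec. tauto. Qed.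

Lemma inG_gapp Z A B : inG Z A -> inG Z B -> inG Z (gapp A B).
Proof. intros HA HB. exact (G_app Z _ A B HA HB (fun n => iff_refl _)). Qed.

Lemma inG_iter_app Z A Succ n : inG Z A -> inG Z Succ -> inG Z (iter_app A Succ n).
Proof. intros HA HSucc. induction n; cbn [iter_app]; auto using inG_gapp. Qed.

Lemma embedding_iter_app X Y f Z Succ n : embedding X Y f -> inG X Z -> inG X Succ ->
  f (iter_app Z Succ n) = iter_app (f Z) (f Succ) n.
Proof.
  intros [_ [_ Hfapp]] HZ HSucc. induction n as [|n IH]; cbn [iter_app]; auto.
  rewrite Hfapp, IH by auto using inG_iter_app. reflexivity.
Qed.

Lemma embedding_app4 X Y f V N A B C : embedding X Y f ->
  inG X V -> inG X N -> inG X A -> inG X B -> inG X C ->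
  f (app4 V N A B C) = app4 (f V) (f N) (f A) (f B) (f C).
Proof.
  intros [_ [_ Hfapp]] HV HN HA HB HC. unfold app4.
  rewrite !Hfapp by auto using inG_gapp. reflexivity.
Qed.

Lemma sigma1_family_app4 Y V N A B C :
  sigma1_set Y V -> sigma1_family Y N -> sigma1_set Y A -> sigma1_set Y B -> sigma1_set Y C ->
  sigma1_family Y (fun n => app4 V (N n) A B C).
Proof.
  intros HV HN HA HB HC. unfold app4.
  repeat apply sigma1_family_gapp; auto using sigma1_family_const.
Qed.

Lemma not_order_reversing_witness X f : ~ order_reversing X f ->
  exists A B k, inG X A /\ inG X B /\ subset A B /\ f B k /\ ~ f A k.
Proof.
  intros Hrev. apply NNPP. intros Hnone. apply Hrev. intros A B HA HB HAB k HkB.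
  apply NNPP. intros HkA. apply Hnone. exists A, B, k. auto.
Qed.

Lemma embedding_not_order_reversing_enum_le X Y f :
  embedding X Y f -> ~ order_reversing X f -> enum_le X Y.
Proof.
  intros Hf Hrev.
  destruct (not_order_reversing_witness X f Hrev) as [A [B [k [HA [HB [HAB [HkB HkA]]]]]]].
  assert (HX : inG X X) by (apply G_base; reflexivity).
  pose proof (G_ce X _ ce_zero_comb) as Hzero.
  pose proof (G_ce X _ ce_succ_comb) as Hsucc.
  pose proof (G_ce X _ ce_select_comb) as Hselect.
  assert (Hsigma1 : forall C, inG X C -> sigma1_set Y (f C))
    by (intros C HC; apply sigma1_set_inG, (proj1 Hf), HC).
  set (F := fun n => app4 (f select_comb) (iter_app (f zero_comb) (f succ_comb) n)
                          (f X) (f A) (f B)).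
  assert (HXF : forall n, X n <-> F n k).
  { intros n. unfold F.
    rewrite <- (embedding_iter_app X Y f), <- (embedding_app4 X Y f)
      by auto using inG_iter_app.
    fold (numeral n). destruct (classic (X n)) as [HXn|HXn].
    - rewrite select_numeral_mem by assumption. tauto.
    - rewrite select_numeral_nonmem by assumption. tauto. }
  apply sigma1_set_enum_le.
  eapply sigma1_ext; [|apply (sigma1_family_at _ F k)].
  - intros [|n []] Hv; try discriminate. symmetry. apply HXF.
  - apply sigma1_family_app4; auto. apply sigma1_family_iter_app; auto.
Qed.

Theorem theorem7p10 (X Y : nat -> Prop) :
  (exists f : (nat -> Prop) -> (nat -> Prop),
      embedding X Y f /\ ~ order_reversing X f) <-> enum_le X Y.
Proof.
  split.
  - intros [f [Hf Hrev]]. exact (embedding_not_order_reversing_enum_le X Y f Hf Hrev).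
  - intros HXY. exists (fun A => A).
    split; [apply identity_embedding, HXY | apply identity_not_order_reversing].
Qed.
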